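(* Let $A=[a_{ij}]\in\mathcal{M}_3(\mathbb{H})$ be strictly upper triangular and suppose that the two quaternions $a_{12}$ and $a_{13}a_{23}^*$ are linearly independent over $\mathbb{R}$. Let $M=\max\{\pi_{\mathbb{R}}(\mathbf{x}^*A\mathbf{x}):\mathbf{x}\in\mathbb{S}_{\mathbb{H}^3}\}$ and let $\mathbf{y}=(y_1,y_2,y_3)\in\mathbb{S}_{\mathbb{H}^3}$ satisfy $\pi_{\mathbb{R}}(\mathbf{y}^*A\mathbf{y})=M$. Then $$y_1^*(a_{12}y_2+a_{13}y_3),\quad y_2^*(a_{12}^*y_1+a_{23}y_3),\quad (y_1^*a_{13}+y_2^*a_{23})y_3$$ all belong to $\mathbb{R}\setminus\{0\}$.
   Context: $\mathbb{H}$ denotes the real quaternions with conjugation $q\mapsto q^*$; for $q=a_0+a_1i+a_2j+a_3k$, $\pi_{\mathbb{R}}(q)=a_0$ is its real part. $\mathbb{S}_{\mathbb{H}^3}=\{\mathbf{x}\in\mathbb{H}^3:\mathbf{x}^*\mathbf{x}=1\}$, where $\mathbf{x}^*$ is the conjugate transpose. *)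

From Stdlib Require Import Reals Lra Lia Psatz.
Open Scope R_scope.

(* H = { a0 + a1 i + a2 j + a3 k } *)
Record quat : Type := Quat { q0 : R; q1 : R; q2 : R; q3 : R }.

Definition qzero : quat := Quat 0 0 0 0.
Definition qone  : quat := Quat 1 0 0 0.
Definition qadd (p q : quat) : quat :=
  Quat (q0 p + q0 q) (q1 p + q1 q) (q2 p + q2 q) (q3 p + q3 q).
Definition qmul (p q : quat) : quat :=
  Quat (q0 p * q0 q - q1 p * q1 q - q2 p * q2 q - q3 p * q3 q)
       (q0 p * q1 q + q1 p * q0 q + q2 p * q3 q - q3 p * q2 q)
       (q0 p * q2 q - q1 p * q3 q + q2 p * q0 q + q3 p * q1 q)
       (q0 p * q3 q + q1 p * q2 q - q2 p * q1 q + q3 p * q0 q).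
Definition qconj (q : quat) : quat := Quat (q0 q) (- q1 q) (- q2 q) (- q3 q).
Definition qscale (r : R) (q : quat) : quat :=
  Quat (r * q0 q) (r * q1 q) (r * q2 q) (r * q3 q).
Definition piR (q : quat) : R := q0 q.

Definition real_nonzero (q : quat) : Prop :=
  q1 q = 0 /\ q2 q = 0 /\ q3 q = 0 /\ q0 q <> 0.

Definition lin_indep_R (p q : quat) : Prop :=
  forall a b : R, qadd (qscale a p) (qscale b q) = qzero -> a = 0 /\ b = 0.

(* Vectors in H^3 and 3x3 matrices over H, indices 0,1,2 *)
Definition qsum3 (f : nat -> quat) : quat := qadd (qadd (f 0%nat) (f 1%nat)) (f 2%nat).

Definition qnorm2 (x : nat -> quat) : quat := qsum3 (fun i => qmul (qconj (x i)) (x i)).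

Definition in_sphere3 (x : nat -> quat) : Prop := qnorm2 x = qone.

Definition qform (A : nat -> nat -> quat) (x : nat -> quat) : quat :=
  qsum3 (fun i => qsum3 (fun j => qmul (qmul (qconj (x i)) (A i j)) (x j))).

Definition strictly_upper3 (A : nat -> nat -> quat) : Prop :=
  forall i j : nat, (i < 3)%nat -> (j < 3)%nat -> (j <= i)%nat -> A i j = qzero.

From Stdlib Require Import Reals Lra Lia Psatz.
Open Scope R_scope.

(* Write a = a12, b = a13, c = a23 and y = (u, v, w).  Since A is strictly
   upper triangular, f(x) := Re(x^* A x) = Re(u^* a v + u^* b w + v^* c w).

   1. By homogeneity, maximality of f on the unit sphere gives
      f(x) <= M |x|^2 for every x, with equality at y.
   2. Expanding M |y + t p|^2 - f(y + t p) >= 0 to first order in t shows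
      that y is stationary: H y = 2M y, where H = A + A^* is the Hermitian
      matrix [[0, a, b], [a^*, 0, c], [b^*, c^*, 0]].
   3. The test vector (1, a^*, 0) gives M > 0 (a <> 0 by independence).
   4. For an eigenvector y of H with eigenvalue k <> 0, no coordinate of y
      vanishes: otherwise one finds s >= 0 with s a + k b c^* = 0, which
      contradicts the R-linear independence of a and b c^*.
   5. The three quaternions of the statement are then k |u|^2, k |v|^2 and
      k |w|^2, which are real and nonzero. *)

Definition qabs2 (p : quat) : R := q0 p * q0 p + q1 p * q1 p + q2 p * q2 p + q3 p * q3 p.

Lemma quat_ext p q : q0 p = q0 q -> q1 p = q1 q -> q2 p = q2 q -> q3 p = q3 q -> p = q.
Proof. destruct p, q; simpl; intros; subst; reflexivity. Qed.

Ltac quat_ring :=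
  apply quat_ext;
  cbv beta iota zeta delta [qabs2 qmul qadd qscale qconj qzero qone q0 q1 q2 q3]; ring.

Lemma qabs2_nonneg p : 0 <= qabs2 p.
Proof. unfold qabs2; nra. Qed.

Lemma qabs2_eq0 p : qabs2 p = 0 -> p = qzero.
Proof.
  destruct p as [x0 x1 x2 x3]; unfold qabs2; cbn; intro H.
  apply quat_ext; cbn; nra.
Qed.

Lemma qabs2_neq0 p : p <> qzero -> qabs2 p <> 0.
Proof. intros Hp Z. exact (Hp (qabs2_eq0 p Z)). Qed.

Lemma qscale_eq0 k p : k <> 0 -> qscale k p = qzero -> p = qzero.
Proof.
  intros Hk H.
  transitivity (qscale (/ k) (qscale k p)).
  - apply quat_ext; cbn; field; exact Hk.
  - rewrite H; quat_ring.
Qed.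

(* H has no zero divisors: a nonzero right factor can be cancelled, since
   q w w^* = |w|^2 q. *)
Lemma qmul_cancel_r q w : w <> qzero -> qmul q w = qzero -> q = qzero.
Proof.
  intros Hw H.
  apply (qscale_eq0 (qabs2 w)).
  - exact (qabs2_neq0 w Hw).
  - transitivity (qmul (qmul q w) (qconj w)); [quat_ring |].
    rewrite H; quat_ring.
Qed.

Lemma lin_indep_neq0_l p q : lin_indep_R p q -> p <> qzero.
Proof.
  intros Hind Hp. destruct (Hind 1 0) as [H10 _].
  - rewrite Hp; quat_ring.
  - lra.
Qed.

Lemma real_nonzero_scaled_norm k p :
  k <> 0 -> p <> qzero -> real_nonzero (qscale k (qmul (qconj p) p)).
Proof.
  intros Hk Hp; unfold real_nonzero; cbn.
  repeat split; try ring.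
  replace (k * _) with (k * qabs2 p) by (unfold qabs2; ring).
  apply Rmult_integral_contrapositive_currified; [exact Hk | exact (qabs2_neq0 p Hp)].
Qed.

Definition norm3 (u v w : quat) : R := qabs2 u + qabs2 v + qabs2 w.

(* Re(x^* A x) for A strictly upper triangular with a12 = a, a13 = b, a23 = c. *)
Definition rform (a b c u v w : quat) : R :=
  piR (qadd (qadd (qmul (qmul (qconj u) a) v) (qmul (qmul (qconj u) b) w))
            (qmul (qmul (qconj v) c) w)).

Ltac real_ring :=
  cbv beta iota zeta delta [norm3 rform qabs2 piR qmul qadd qscale qconj qzero qone q0 q1 q2 q3];
  ring.

Lemma qform_upper A x : strictly_upper3 A ->
  piR (qform A x) = rform (A 0%nat 1%nat) (A 0%nat 2%nat) (A 1%nat 2%nat) (x 0%nat) (x 1%nat) (x 2%nat).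
Proof.
  intro Hup. unfold qform, qsum3.
  rewrite (Hup 0%nat 0%nat), (Hup 1%nat 0%nat), (Hup 1%nat 1%nat),
          (Hup 2%nat 0%nat), (Hup 2%nat 1%nat), (Hup 2%nat 2%nat) by lia.
  real_ring.
Qed.

Lemma in_sphere3_norm3 x : in_sphere3 x <-> norm3 (x 0%nat) (x 1%nat) (x 2%nat) = 1.
Proof.
  unfold in_sphere3.
  replace (qnorm2 x) with (Quat (norm3 (x 0%nat) (x 1%nat) (x 2%nat)) 0 0 0)
    by (unfold qnorm2, qsum3, norm3; quat_ring).
  split; intro H.
  - injection H; auto.
  - rewrite H; reflexivity.
Qed.

Lemma rform_le_scaled a b c M :
  (forall u v w, norm3 u v w = 1 -> rform a b c u v w <= M) ->
  forall u v w, rform a b c u v w <= M * norm3 u v w.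
Proof.
  intros Hsph u v w.
  pose proof (qabs2_nonneg u); pose proof (qabs2_nonneg v); pose proof (qabs2_nonneg w).
  destruct (Req_dec (norm3 u v w) 0) as [Z | Z].
  - unfold norm3 in Z.
    rewrite (qabs2_eq0 u), (qabs2_eq0 v), (qabs2_eq0 w) by lra.
    replace (rform a b c qzero qzero qzero) with 0 by real_ring.
    replace (norm3 qzero qzero qzero) with 0 by real_ring. lra.
  - assert (Hpos : 0 < norm3 u v w) by (unfold norm3 in *; lra).
    set (s := / sqrt (norm3 u v w)).
    assert (Hs : s * s * norm3 u v w = 1).
    { unfold s. pose proof (sqrt_lt_R0 _ Hpos).
      rewrite <- (sqrt_sqrt (norm3 u v w)) at 3 by lra. field; lra. }
    specialize (Hsph (qscale s u) (qscale s v) (qscale s w)).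
    replace (norm3 (qscale s u) (qscale s v) (qscale s w)) with (s * s * norm3 u v w)
      in Hsph by real_ring.
    replace (rform a b c (qscale s u) (qscale s v) (qscale s w))
      with (s * s * rform a b c u v w) in Hsph by real_ring.
    specialize (Hsph Hs).
    replace (rform a b c u v w) with (norm3 u v w * (s * s * rform a b c u v w))
      by (transitivity ((s * s * norm3 u v w) * rform a b c u v w); [ring | rewrite Hs; ring]).
    rewrite (Rmult_comm M). apply Rmult_le_compat_l; lra.
Qed.

(* If t L + t^2 K >= 0 for every real t, then L = 0 (take t small of sign -L). *)
Lemma linear_coeff_zero L K : (forall t, 0 <= t * L + t * t * K) -> L = 0.
Proof.
  intro H. destruct (Req_dec L 0) as [| HL]; [assumption | exfalso].
  set (k := Rabs K + 1).
  assert (Hk : 0 < k) by (unfold k; pose proof (Rabs_pos K); lra).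
  assert (HKk : K <= k) by (unfold k; pose proof (Rle_abs K); lra).
  set (t := - L / (2 * k)).
  assert (Ht : t * k = - L / 2) by (unfold t; field; lra).
  specialize (H t).
  assert (t * t * K <= t * t * k) by (apply Rmult_le_compat_l; nra).
  assert (0 < L * L) by nra.
  nra.
Qed.

(* Coordinates of 2M y - H y for H = A + A^*; the gradient of M|x|^2 - f at y. *)
Definition resid_u (a b : quat) M (u v w : quat) : quat :=
  qadd (qscale (2 * M) u) (qscale (-1) (qadd (qmul a v) (qmul b w))).
Definition resid_v (a c : quat) M (u v w : quat) : quat :=
  qadd (qscale (2 * M) v) (qscale (-1) (qadd (qmul (qconj a) u) (qmul c w))).
Definition resid_w (b c : quat) M (u v w : quat) : quat :=
  qadd (qscale (2 * M) w) (qscale (-1) (qadd (qmul (qconj b) u) (qmul (qconj c) v))).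

Lemma gradient_zero_eq k x Y : qadd (qscale k x) (qscale (-1) Y) = qzero -> Y = qscale k x.
Proof.
  intro H. transitivity (qadd (qscale (-1) (qadd (qscale k x) (qscale (-1) Y))) (qscale k x));
    [quat_ring | rewrite H; quat_ring].
Qed.

Definition qdot (p q : quat) : R := piR (qmul (qconj p) q).

Lemma excess_expansion a b c M u v w p q r t :
  M * norm3 (qadd u (qscale t p)) (qadd v (qscale t q)) (qadd w (qscale t r))
  - rform a b c (qadd u (qscale t p)) (qadd v (qscale t q)) (qadd w (qscale t r))
  = (M * norm3 u v w - rform a b c u v w)
    + t * (qdot p (resid_u a b M u v w) + qdot q (resid_v a c M u v w)
           + qdot r (resid_w b c M u v w))
    + t * t * (M * norm3 p q r - rform a b c p q r).
Proof.
  unfold qdot, resid_u, resid_v, resid_w; real_ring.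
Qed.

(* If the excess M|x|^2 - f(x) is nonnegative and vanishes at y, then
   H y = 2M y: the first-order term of excess_expansion along the gradient
   direction is t |gradient|^2, which must vanish. *)
Lemma stationary a b c M u v w :
  (forall p q r, rform a b c p q r <= M * norm3 p q r) ->
  rform a b c u v w = M * norm3 u v w ->
  qadd (qmul a v) (qmul b w) = qscale (2 * M) u /\
  qadd (qmul (qconj a) u) (qmul c w) = qscale (2 * M) v /\
  qadd (qmul (qconj b) u) (qmul (qconj c) v) = qscale (2 * M) w.
Proof.
  intros Hle Heq.
  set (p := resid_u a b M u v w); set (q := resid_v a c M u v w);
  set (r := resid_w b c M u v w).
  assert (Hgrad : norm3 p q r = 0).
  { apply (linear_coeff_zero _ (M * norm3 p q r - rform a b c p q r)). intro t.
    pose proof (excess_expansion a b c M u v w p q r t) as E; fold p q r in E.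
    pose proof (Hle (qadd u (qscale t p)) (qadd v (qscale t q)) (qadd w (qscale t r))).
    replace (qdot p p + qdot q q + qdot r r) with (norm3 p q r) in E
      by (unfold qdot; real_ring).
    lra. }
  unfold norm3 in Hgrad.
  pose proof (qabs2_nonneg p); pose proof (qabs2_nonneg q); pose proof (qabs2_nonneg r).
  assert (Zp : p = qzero) by (apply qabs2_eq0; lra).
  assert (Zq : q = qzero) by (apply qabs2_eq0; lra).
  assert (Zr : r = qzero) by (apply qabs2_eq0; lra).
  unfold p, resid_u in Zp; unfold q, resid_v in Zq; unfold r, resid_w in Zr.
  repeat split; apply gradient_zero_eq; assumption.
Qed.

(* Step 3: the maximum is positive as soon as a12 <> 0, by the test vector
   (1, a^*, 0), on which the form equals |a|^2 and the norm 1 + |a|^2. *)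
Lemma max_pos a b c M :
  a <> qzero -> (forall p q r, rform a b c p q r <= M * norm3 p q r) -> 0 < M.
Proof.
  intros Ha Hle.
  pose proof (Hle qone (qconj a) qzero) as H.
  replace (rform a b c qone (qconj a) qzero) with (qabs2 a) in H by real_ring.
  replace (norm3 qone (qconj a) qzero) with (1 + qabs2 a) in H by real_ring.
  pose proof (qabs2_nonneg a); pose proof (qabs2_neq0 a Ha).
  nra.
Qed.

Section Eigenvector.

Variables (a b c u v w : quat) (k : R).
Hypothesis indep : lin_indep_R a (qmul b (qconj c)).
Hypothesis k_neq0 : k <> 0.
Hypothesis eig_u : qadd (qmul a v) (qmul b w) = qscale k u.
Hypothesis eig_v : qadd (qmul (qconj a) u) (qmul c w) = qscale k v.
Hypothesis eig_w : qadd (qmul (qconj b) u) (qmul (qconj c) v) = qscale k w.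
Hypothesis y_nonzero : ~ (u = qzero /\ v = qzero /\ w = qzero).

(* By independence, s a + k b c^* never vanishes since k <> 0; a vanishing
   coordinate of y would produce such a relation. *)
Lemma no_relation s : qadd (qscale s a) (qscale k (qmul b (qconj c))) <> qzero.
Proof. intro H. destruct (indep s k H). contradiction. Qed.

(* If u = 0 then c w = k v, a v + b w = 0, hence (a c + k b) w = 0;
   w <> 0, so a c + k b = 0 and |c|^2 a + k b c^* = (a c + k b) c^* = 0. *)
Lemma u_neq0 : u <> qzero.
Proof.
  intro Hu.
  assert (cw : qmul c w = qscale k v) by (rewrite <- eig_v, Hu; quat_ring).
  assert (av_bw : qadd (qmul a v) (qmul b w) = qzero) by (rewrite eig_u, Hu; quat_ring).
  assert (w_neq0 : w <> qzero).
  { intro Hw. apply y_nonzero. repeat split; trivial.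
    apply (qscale_eq0 k); [exact k_neq0 |]. rewrite <- cw, Hw; quat_ring. }
  assert (rel : qadd (qmul a c) (qscale k b) = qzero).
  { apply (qmul_cancel_r _ w w_neq0).
    transitivity (qadd (qmul a (qmul c w)) (qscale k (qmul b w))); [quat_ring |].
    rewrite cw. transitivity (qscale k (qadd (qmul a v) (qmul b w))); [quat_ring |].
    rewrite av_bw; quat_ring. }
  apply (no_relation (qabs2 c)).
  transitivity (qmul (qadd (qmul a c) (qscale k b)) (qconj c)); [quat_ring |].
  rewrite rel; quat_ring.
Qed.

(* If v = 0 then b w = k u, a^* u + c w = 0, hence (a^* b + k c) w = 0;
   so a^* b + k c = 0 and |b|^2 a + k b c^* = b (a^* b + k c)^* = 0. *)
Lemma v_neq0 : v <> qzero.
Proof.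
  intro Hv.
  assert (bw : qmul b w = qscale k u) by (rewrite <- eig_u, Hv; quat_ring).
  assert (au_cw : qadd (qmul (qconj a) u) (qmul c w) = qzero) by (rewrite eig_v, Hv; quat_ring).
  assert (w_neq0 : w <> qzero).
  { intro Hw. apply y_nonzero. repeat split; trivial.
    apply (qscale_eq0 k); [exact k_neq0 |]. rewrite <- bw, Hw; quat_ring. }
  assert (rel : qadd (qmul (qconj a) b) (qscale k c) = qzero).
  { apply (qmul_cancel_r _ w w_neq0).
    transitivity (qadd (qmul (qconj a) (qmul b w)) (qscale k (qmul c w))); [quat_ring |].
    rewrite bw. transitivity (qscale k (qadd (qmul (qconj a) u) (qmul c w))); [quat_ring |].
    rewrite au_cw; quat_ring. }
  apply (no_relation (qabs2 b)).
  transitivity (qmul b (qconj (qadd (qmul (qconj a) b) (qscale k c)))); [quat_ring |].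
  rewrite rel; quat_ring.
Qed.

(* If w = 0 then a v = k u, b^* u + c^* v = 0, hence d v = 0 for
   d = b^* a + k c^*; so d = 0 and |b|^2 a + k b c^* = b d = 0. *)
Lemma w_neq0 : w <> qzero.
Proof.
  intro Hw.
  assert (av : qmul a v = qscale k u) by (rewrite <- eig_u, Hw; quat_ring).
  assert (bu_cv : qadd (qmul (qconj b) u) (qmul (qconj c) v) = qzero)
    by (rewrite eig_w, Hw; quat_ring).
  assert (v_neq0 : v <> qzero).
  { intro Hv. apply y_nonzero. repeat split; trivial.
    apply (qscale_eq0 k); [exact k_neq0 |]. rewrite <- av, Hv; quat_ring. }
  assert (rel : qadd (qmul (qconj b) a) (qscale k (qconj c)) = qzero).
  { apply (qmul_cancel_r _ v v_neq0).
    transitivity (qadd (qmul (qconj b) (qmul a v)) (qscale k (qmul (qconj c) v))); [quat_ring |].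
    rewrite av. transitivity (qscale k (qadd (qmul (qconj b) u) (qmul (qconj c) v))); [quat_ring |].
    rewrite bu_cv; quat_ring. }
  apply (no_relation (qabs2 b)).
  transitivity (qmul b (qadd (qmul (qconj b) a) (qscale k (qconj c)))); [quat_ring |].
  rewrite rel; quat_ring.
Qed.

(* Step 5: the three quaternions equal k |u|^2, k |v|^2 and k |w|^2. *)
Lemma eigenvector_products_real_nonzero :
  real_nonzero (qmul (qconj u) (qadd (qmul a v) (qmul b w))) /\
  real_nonzero (qmul (qconj v) (qadd (qmul (qconj a) u) (qmul c w))) /\
  real_nonzero (qmul (qadd (qmul (qconj u) b) (qmul (qconj v) c)) w).
Proof.
  split; [| split].
  - rewrite eig_u.
    replace (qmul (qconj u) (qscale k u)) with (qscale k (qmul (qconj u) u)) by quat_ring.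
    now apply real_nonzero_scaled_norm, u_neq0.
  - rewrite eig_v.
    replace (qmul (qconj v) (qscale k v)) with (qscale k (qmul (qconj v) v)) by quat_ring.
    now apply real_nonzero_scaled_norm, v_neq0.
  - replace (qadd (qmul (qconj u) b) (qmul (qconj v) c))
      with (qconj (qadd (qmul (qconj b) u) (qmul (qconj c) v))) by quat_ring.
    rewrite eig_w.
    replace (qmul (qconj (qscale k w)) w) with (qscale k (qmul (qconj w) w)) by quat_ring.
    now apply real_nonzero_scaled_norm, w_neq0.
Qed.

End Eigenvector.

(* indices shifted: a_{12} = A 0 1, a_{13} = A 0 2, a_{23} = A 1 2; y_k = y (k-1) *)
Theorem lemma5p2 (A : nat -> nat -> quat) (y : nat -> quat) :
  strictly_upper3 A ->
  lin_indep_R (A 0%nat 1%nat) (qmul (A 0%nat 2%nat) (qconj (A 1%nat 2%nat))) ->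
  in_sphere3 y ->
  (forall x : nat -> quat, in_sphere3 x -> piR (qform A x) <= piR (qform A y)) ->
  real_nonzero (qmul (qconj (y 0%nat))
                     (qadd (qmul (A 0%nat 1%nat) (y 1%nat)) (qmul (A 0%nat 2%nat) (y 2%nat)))) /\
  real_nonzero (qmul (qconj (y 1%nat))
                     (qadd (qmul (qconj (A 0%nat 1%nat)) (y 0%nat)) (qmul (A 1%nat 2%nat) (y 2%nat)))) /\
  real_nonzero (qmul (qadd (qmul (qconj (y 0%nat)) (A 0%nat 2%nat))
                           (qmul (qconj (y 1%nat)) (A 1%nat 2%nat)))
                     (y 2%nat)).
Proof.
  intros Hup Hindep Hy Hmax.
  set (a := A 0%nat 1%nat); set (b := A 0%nat 2%nat); set (c := A 1%nat 2%nat).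
  set (M := piR (qform A y)).
  apply in_sphere3_norm3 in Hy.
  assert (Hbound : forall p q r, rform a b c p q r <= M * norm3 p q r).
  { apply rform_le_scaled. intros p q r Hn.
    set (x := fun i : nat => match i with 0%nat => p | 1%nat => q | _ => r end).
    specialize (Hmax x). rewrite (qform_upper A x Hup), in_sphere3_norm3 in Hmax.
    exact (Hmax Hn). }
  assert (HM : rform a b c (y 0%nat) (y 1%nat) (y 2%nat) = M * norm3 (y 0%nat) (y 1%nat) (y 2%nat)).
  { rewrite Hy, Rmult_1_r. unfold M. symmetry. apply qform_upper, Hup. }
  pose proof (lin_indep_neq0_l _ _ Hindep) as Ha.
  pose proof (max_pos a b c M Ha Hbound) as Mpos.
  destruct (stationary a b c M _ _ _ Hbound HM) as (Eu & Ev & Ew).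
  apply (eigenvector_products_real_nonzero a b c _ _ _ (2 * M)); try assumption; [lra |].
  intros (Z0 & Z1 & Z2). rewrite Z0, Z1, Z2 in Hy.
  replace (norm3 qzero qzero qzero) with 0 in Hy by real_ring. lra.
Qed.
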